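(* Let $f:\mathbb{R}^n_{>0}\to\mathbb{R}^n_{>0}$ be order-preserving, homogeneous, and multiplicatively convex. Let $\mathcal{C}$ be the set of strongly connected components of $\mathcal{G}(f)$ and $\mathcal{F}$ the set of final classes of $\mathcal{G}(f)$. Then $$r(f)=\max_{C\in\mathcal{C}}r(f^C_0)\quad\text{and}\quad \lambda(f)=\min_{C\in\mathcal{F}}r(f^C_0).$$
   Context: $[n]=\{1,\dots,n\}$; entrywise order. Order-preserving: $x\le y\Rightarrow f(x)\le f(y)$; homogeneous: $f(tx)=tf(x)$ for $t>0$. Multiplicatively convex: each entry of $\log\circ f\circ\exp$ (entrywise $\log,\exp$) is convex on $\mathbb{R}^n$. $f$ extends continuously to an order-preserving homogeneous map on $\mathbb{R}^n_{\ge0}$, also denoted $f$. $P^J_0(x)_j=x_j$ for $j\in J$, $0$ otherwise; $f^J_0=P^J_0fP^J_0$. For $g$ order-preserving homogeneous on $\mathbb{R}^n_{\ge0}$ (or $\mathbb{R}^n_{>0}$): $r(g)=\inf_{x\in\mathbb{R}^n_{>0}}\max_i g(x)_i/x_i$ and $\lambda(g)=\sup_{x\in\mathbb{R}^n_{>0}}\min_i g(x)_i/x_i$. $\mathcal{G}(f)$ is the directed graph on $[n]$ with an arc $i\to j$ when $\lim_{t\to\infty}f(\exp(te_{\{j\}}))_i=\infty$ ($e_{\{j\}}$ the $j$-th standard basis vector). A final class is a strongly connected component with no arcs leaving it. *)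

From HB Require Import structures.
From mathcomp Require Import all_boot all_order all_algebra.
From mathcomp Require Import all_classical all_reals all_analysis.
Set Implicit Arguments. Unset Strict Implicit. Unset Printing Implicit Defensive.
Import Order.TTheory GRing.Theory Num.Theory.
Local Open Scope classical_set_scope.
Local Open Scope ring_scope.

Section Defs.
Variables (R : realType) (n : nat).
(* vectors of R^{n+1}, indexed by 'I_n.+1 = [n+1] *)
Notation vec := ('I_n.+1 -> R).

Definition posvec (x : vec) : Prop := forall i, 0 < x i.

Definition order_preserving (f : vec -> vec) : Prop :=
  forall x y, posvec x -> posvec y -> (forall i, x i <= y i) ->
    forall i, f x i <= f y i.

Definition homogeneous (f : vec -> vec) : Prop :=
  forall x t, posvec x -> 0 < t -> f (fun i => t * x i) = (fun i => t * f x i).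

Definition vexp (u : vec) : vec := fun i => expR (u i).

(* each entry of log o f o exp is convex on R^{n+1} *)
Definition mult_convex (f : vec -> vec) : Prop :=
  forall i (u v : vec) (a : R), 0 <= a <= 1 ->
    ln (f (vexp (fun j => a * u j + (1 - a) * v j)) i)
      <= a * ln (f (vexp u) i) + (1 - a) * ln (f (vexp v) i).

(* continuous extension of f to the closed cone:
   ext f x = lim_{eps -> 0+} f (x + eps 1) = inf_{eps>0} f (x + eps 1) (entrywise) *)
Definition ext (f : vec -> vec) (x : vec) : vec :=
  fun i => inf [set f (fun j => x j + e) i | e in [set e : R | 0 < e]].

Definition proj0 (J : set 'I_n.+1) (x : vec) : vec :=
  fun j => if j \in J then x j else 0.

Definition restr0 (f : vec -> vec) (J : set 'I_n.+1) : vec -> vec :=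
  fun x => proj0 J (ext f (proj0 J x)).

Definition max_ratio (g : vec -> vec) (x : vec) : R :=
  \big[Num.max/(g x ord0 / x ord0)]_(i < n.+1) (g x i / x i).
Definition min_ratio (g : vec -> vec) (x : vec) : R :=
  \big[Num.min/(g x ord0 / x ord0)]_(i < n.+1) (g x i / x i).

Definition cw_r (g : vec -> vec) : R :=
  inf [set max_ratio g x | x in posvec].
Definition cw_lambda (g : vec -> vec) : R :=
  sup [set min_ratio g x | x in posvec].

Definition exp_e (t : R) (j : 'I_n.+1) : vec :=
  fun k => if k == j then expR t else 1.

Definition gf_arc (f : vec -> vec) (i j : 'I_n.+1) : Prop :=
  (fun t : R => f (exp_e t j) i) @ +oo --> +oo.

Inductive reach (A : 'I_n.+1 -> 'I_n.+1 -> Prop) : 'I_n.+1 -> 'I_n.+1 -> Prop :=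
| reach_refl i : reach A i i
| reach_step i j k : A i j -> reach A j k -> reach A i k.

Definition is_scc (A : 'I_n.+1 -> 'I_n.+1 -> Prop) (C : set 'I_n.+1) : Prop :=
  exists i, C = [set j | reach A i j /\ reach A j i].

Definition is_final (A : 'I_n.+1 -> 'I_n.+1 -> Prop) (C : set 'I_n.+1) : Prop :=
  is_scc A C /\ (forall i j, C i -> A i j -> C j).

End Defs.

From HB Require Import structures.
From mathcomp Require Import all_boot all_order all_algebra.
From mathcomp Require Import all_classical all_reals all_analysis.
From mathcomp Require Import ring lra.
Import Order.TTheory GRing.Theory Num.Theory.
Local Open Scope classical_set_scope.
Local Open Scope ring_scope.
Set Implicit Arguments. Unset Strict Implicit. Unset Printing Implicit Defensive.

(* In log coordinates, logf = ln \o f \o exp is monotone, commutes with adding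
   constants, and each coordinate is convex.  Convexity reads the graph G(f) off
   logf: without an arc i -> j, logf _ i is convex, nondecreasing and bounded
   along the direction e_j, hence constant, so logf u i only depends on the
   successors of i; with an arc it grows at least linearly along e_j.

   Upper bound for r: peel the strongly connected components off a closed set
   from the top.  Near-optimal vectors for r(f^C_0) on the top class C are
   combined with a vector for the rest, scaled down so that it is a negligible
   perturbation on C, giving x with f x <= (max_C r(f^C_0) + eps) x.

   Lower bound for lambda: on a final class C with r(f^C_0) > g, the linear
   growth along arcs, propagated along walks of bounded length, keeps the spread
   of the iterates of logf bounded, while r(f^C_0) > g forces some coordinate to
   grow faster than ln g per step; averaging the iterates gives v with
   v + ln g <= logf v on C.  A class that is not final reaches a lower class,
   which pulls its coordinates up in the same way.  The remaining two
   inequalities compare f with f^C_0 directly. *)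

Lemma finite_directed_choice (T : finType) (U : Type) (Q : U -> Prop)
    (join : U -> U -> U) (u0 : U) (P : T -> U -> Prop) :
  Q u0 -> (forall u v, Q u -> Q v -> Q (join u v)) ->
  (forall u v, join u v = join v u) ->
  (forall x u v, Q u -> Q v -> P x u -> P x (join u v)) ->
  (forall x, exists2 u, Q u & P x u) -> exists2 u, Q u & forall x, P x u.
Proof.
move=> Qu0 Qjoin joinC Pjoin ex.
suff [u Qu Pu] : exists2 u, Q u & forall x, x \in enum T -> P x u.
  by exists u => // x; apply: Pu; rewrite mem_enum.
elim: (enum T) => [|a s [u Qu Pu]]; first by exists u0.
have [v Qv Pv] := ex a.
exists (join u v) => [|x]; first exact: Qjoin.
rewrite inE => /orP[/eqP->|xs]; first by rewrite joinC; apply: Pjoin.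
exact: Pjoin (Pu x xs).
Qed.

Section ConvexNondecreasing.
Variables (R : realType) (phi : R -> R).
Hypothesis phi_convex : forall a s t, 0 <= a <= 1 ->
  phi (a * s + (1 - a) * t) <= a * phi s + (1 - a) * phi t.
Hypothesis phi_nondecr : {homo phi : s t / s <= t}.

Lemma convex_chord_ge s t : 0 < s -> s <= t -> phi 0 + t / s * (phi s - phi 0) <= phi t.
Proof.
move=> s0 st; have t0 : 0 < t := lt_le_trans s0 st.
have a01 : 0 <= s / t <= 1.
  by rewrite divr_ge0 ?(ltW s0) ?(ltW t0) //= ler_pdivrMr // mul1r.
have := phi_convex t 0 a01; rewrite mulr0 addr0 divfK ?gt_eqF // => h.
have : t / s * phi s <= t / s * (s / t * phi t + (1 - s / t) * phi 0).
  by rewrite ler_pM2l // divr_gt0.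
suff -> : t / s * (s / t * phi t + (1 - s / t) * phi 0) = phi t + (t / s - 1) * phi 0.
  lra.
by field; rewrite !gt_eqF.
Qed.

Lemma convex_bounded_const B :
  (forall t, 0 <= t -> phi t <= B) -> forall s, 0 <= s -> phi s = phi 0.
Proof.
move=> bd s s0; apply/eqP; rewrite eq_le (phi_nondecr s0) andbT leNgt.
apply/negP => lt0s; have d0 : 0 < phi s - phi 0 by rewrite subr_gt0.
have {}s0 : 0 < s.
  by rewrite lt_neqAle s0 andbT; apply: contraTneq lt0s => <-; rewrite ltxx.
have [k k1 ek] : exists2 k, 1 <= k &
    k * (phi s - phi 0) = phi s - phi 0 + (B - phi 0).
  exists (1 + (B - phi 0) / (phi s - phi 0)); last first.
    by rewrite mulrDl mul1r divfK ?gt_eqF.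
  rewrite lerDl divr_ge0 ?(ltW d0) // subr_ge0.
  exact: le_trans (ltW lt0s) (bd _ (ltW s0)).
have st : s <= s * k by rewrite ler_peMr // ltW.
have := convex_chord_ge s0 st; rewrite [s * k / s]mulrC mulKf ?gt_eqF // ek.
rewrite leNgt => /negP; apply.
apply: le_lt_trans (bd _ (ltW (lt_le_trans s0 st))) _; lra.
Qed.

Lemma convex_linear_lb t1 : 0 < t1 -> phi 0 + 1 <= phi t1 ->
  forall t, 0 <= t -> phi 0 + t / t1 - 1 <= phi t.
Proof.
move=> t10 h1 t t0; have [tt1|t1t] := leP t t1.
  have : t / t1 <= 1 by rewrite ler_pdivrMr // mul1r.
  have := phi_nondecr t0; lra.
have := convex_chord_ge t10 (ltW t1t).
have : t / t1 <= t / t1 * (phi t1 - phi 0).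
  by apply: ler_peMr; [rewrite divr_ge0 // ltW | lra].
lra.
Qed.

End ConvexNondecreasing.

Lemma gap_bounded_of_contraction (R : realType) (M m : nat -> R) (D : nat) A E c :
  (0 < D)%N -> 0 < c -> c <= 1 ->
  (forall k, M (k + D)%N <= M k + A) ->
  (forall k, m k + c * (M k - m k) - E <= m (k + D)%N) ->
  exists B, forall k, M k - m k <= B.
Proof.
move=> D0 c0 c1 hM hm.
set B := Num.max (\big[Num.max/0]_(r < D) (M r - m r)) ((A + E) / c).
exists B => k; elim/ltn_ind: k => k IH.
have [kD|Dk] := ltnP k D.
  apply: le_trans (_ : _ <= \big[Num.max/0]_(r < D) (M r - m r)) _.
    exact: (@le_bigmax _ _ _ 0 (fun r : 'I_D => M r - m r) (Ordinal kD)).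
  by rewrite le_max lexx.
have e : k = ((k - D) + D)%N by rewrite subnK.
have IH' : M (k - D)%N - m (k - D)%N <= B.
  by apply: IH; rewrite ltn_subrL D0 (leq_trans D0 Dk).
have hMk := hM (k - D)%N; have hmk := hm (k - D)%N; rewrite -e in hMk hmk.
have IHc : (1 - c) * (M (k - D)%N - m (k - D)%N) <= (1 - c) * B.
  by apply: ler_wpM2l; rewrite ?subr_ge0.
have AE : A + E <= c * B by rewrite mulrC -ler_pdivrMr // le_max lexx orbT.
lra.
Qed.

(** * Reachability and closed sets *)

Section Graph.
Variables (n : nat) (A : 'I_n.+1 -> 'I_n.+1 -> Prop).

Inductive walk : nat -> 'I_n.+1 -> 'I_n.+1 -> Prop :=
| walk0 i : walk 0 i i
| walkS d i j k : A i j -> walk d j k -> walk d.+1 i k.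

Lemma reach_trans i j k : reach A i j -> reach A j k -> reach A i k.
Proof. by elim=> // i' j' k' a _ IH /IH; apply: reach_step a. Qed.

Lemma reach_arc i j : A i j -> reach A i j.
Proof. by move=> a; apply: reach_step a (reach_refl _ _). Qed.

Lemma reach_walk i j : reach A i j -> exists d, walk d i j.
Proof.
elim=> [i'|i' j' k' a _ [d w]]; first by exists 0%N; constructor.
by exists d.+1; apply: walkS a w.
Qed.

Lemma reach_walk_bounded : exists2 D, (0 < D)%N &
  forall i j, reach A i j -> exists2 d, (d <= D)%N & walk d i j.
Proof.
suff [D D0 HD] : exists2 D, (0 < D)%N & forall p : 'I_n.+1 * 'I_n.+1,
    reach A p.1 p.2 -> exists2 d, (d <= D)%N & walk d p.1 p.2.
  by exists D => // i j /(HD (i, j)).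
apply: (@finite_directed_choice _ _ _ maxn 1%N) => //.
- by move=> u v u0 _; rewrite leq_max u0.
- exact: maxnC.
- move=> [i j] u v _ _ /= H /H [d du w]; exists d => //.
  by rewrite leq_max du.
move=> [i j] /=; have [r|nr] := pselect (reach A i j); last by exists 1%N.
have [d w] := reach_walk r; exists d.+1 => // _; exists d => //.
Qed.

Definition closed (S : {set 'I_n.+1}) := forall i j, i \in S -> A i j -> j \in S.

Lemma closed_setT : closed [set: 'I_n.+1].
Proof. by move=> i j _ _; rewrite inE. Qed.

Lemma closed_reach S i j : closed S -> i \in S -> reach A i j -> j \in S.
Proof. by move=> cS iS r; elim: r iS => // i' j' k' a _ IH /cS /(_ a). Qed.

Definition scc i : set 'I_n.+1 := [set j | reach A i j /\ reach A j i].

Lemma scc_refl i : i \in scc i.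
Proof. by rewrite in_setE; split; apply: reach_refl. Qed.

Lemma scc_reach i j k : j \in scc i -> k \in scc i -> reach A j k.
Proof.
by rewrite !in_setE => -[_ rji] [rik _]; apply: reach_trans rji rik.
Qed.

(* A vertex [i] of [S] with fewest predecessors in [S] is reached back by each
   of its predecessors in [S]. *)
Lemma top_class S i0 : closed S -> i0 \in S -> exists2 i, i \in S &
  {subset scc i <= S} /\ closed (S :\: [set j | j \in scc i]).
Proof.
move=> cS i0S.
pose pred_in i := [set j in S | `[< reach A j i >]].
have [i iS imin] := @arg_minnP _ i0 (mem S) (fun i => #|pred_in i|) i0S.
exists i => //; split.
  by move=> j; rewrite in_setE => -[rij _]; apply: closed_reach rij.
move=> k l; rewrite !inE => /andP[kC kS] a; rewrite (cS k l kS a) andbT.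
apply: contra kC => lC; rewrite in_setE.
have rki : reach A k i.
  by apply: reach_trans (reach_arc a) _; move: lC; rewrite in_setE => -[].
split => //.
have sub : pred_in k \subset pred_in i.
  apply/fintype.subsetP => x; rewrite !inE => /andP[-> /asboolP r] /=.
  by apply/asboolP; apply: reach_trans r rki.
have /eqP eki : pred_in k == pred_in i by rewrite eqEcard sub imin.
have : i \in pred_in k.
  by rewrite eki inE; apply/andP; split => //; apply/asboolP; apply: reach_refl.
by rewrite inE => /andP[_ /asboolP].
Qed.

Lemma closed_ind (P : {set 'I_n.+1} -> Prop) : P finset.set0 ->
  (forall S i, closed S -> {subset scc i <= S} ->
     closed (S :\: [set j | j \in scc i]) ->
     P (S :\: [set j | j \in scc i]) -> P S) ->
  forall S, closed S -> P S.
Proof.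
move=> P0 PS S; have [m] := ubnP #|S|; elim: m S => // m IH S Sm cS.
have [->|/set0Pn [i0 i0S]] := eqVneq S finset.set0; first exact: P0.
have [i iS [sub cS']] := top_class cS i0S.
apply: PS sub cS' (IH _ _ cS') => //; rewrite -ltnS (leq_trans _ Sm) // ltnS.
apply: proper_card; rewrite finset.properEneq finset.subsetDl andbT.
by apply: contraTneq iS => <-; rewrite !inE scc_refl.
Qed.

Lemma final_class_exists : exists i, closed [set j | j \in scc i].
Proof.
pose succ_of i := [set j | `[< reach A i j >]]%SET.
have [i _ imin] := @arg_minnP _ ord0 xpredT (fun i => #|succ_of i|) isT.
exists i => k l; rewrite !inE /= => -[rik rki] a.
have ril : reach A i l by apply: reach_trans rik (reach_arc a).
split => //.
have sub : succ_of l \subset succ_of i.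
  by apply/fintype.subsetP => x; rewrite !inE; apply: reach_trans ril.
have /eqP eli : succ_of l == succ_of i by rewrite eqEcard sub imin.
have : i \in succ_of l by rewrite eli inE; apply/asboolP; apply: reach_refl.
by rewrite inE => /asboolP.
Qed.

End Graph.

Arguments closed_setT {n A}.

(** * Topical maps *)

Section Topical.
Variables (R : realType) (n : nat).
Notation vec := ('I_n.+1 -> R).

Definition vmax (u : vec) := \big[Num.max/u ord0]_k u k.
Definition vmin (u : vec) := \big[Num.min/u ord0]_k u k.

Lemma le_vmax (u : vec) k : u k <= vmax u.
Proof. exact: le_bigmax. Qed.

Lemma vmin_le (u : vec) k : vmin u <= u k.
Proof. exact: bigmin_le. Qed.

Lemma vmax_attained (u : vec) : exists k, vmax u = u k.
Proof.
have [k _ hk] := @arg_maxP _ _ 'I_n.+1 ord0 xpredT u isT.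
exists k; apply/eqP; rewrite eq_le le_vmax andbT.
by apply: bigmax_le => [|i _]; apply: hk.
Qed.

Lemma vmin_attained (u : vec) : exists k, vmin u = u k.
Proof.
have [k _ hk] := @arg_minP _ _ 'I_n.+1 ord0 xpredT u isT.
exists k; apply/eqP; rewrite eq_le vmin_le /=.
by apply: le_bigmin => [|i _]; apply: hk.
Qed.

Lemma vmin_gt0 (x : vec) : posvec x -> 0 < vmin x.
Proof. by move=> px; have [k ->] := vmin_attained x; apply: px. Qed.

Lemma le_vsum (x : vec) j : posvec x -> x j <= \sum_l x l.
Proof. by move=> px; rewrite (bigD1 j) //= lerDl sumr_ge0 // => l _; apply: ltW. Qed.

Variable P : vec -> vec.
Hypothesis P_mono : forall u v : vec, (forall k, u k <= v k) -> forall i, P u i <= P v i.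
Hypothesis P_shift : forall (u : vec) t i, P (fun k => u k + t) i = P u i + t.

Lemma topical_ge_vmin a (w : vec) i :
  (forall k, a <= P (fun _ => 0) k) -> vmin w + a <= P w i.
Proof.
move=> ha; have : P (fun k => 0 + vmin w) i <= P w i.
  by apply: P_mono => k; rewrite add0r vmin_le.
by rewrite P_shift; have := ha i; lra.
Qed.

Lemma topical_le_vmax a (w : vec) i :
  (forall k, P (fun _ => 0) k <= a) -> P w i <= vmax w + a.
Proof.
move=> ha; have : P w i <= P (fun k => 0 + vmax w) i.
  by apply: P_mono => k; rewrite add0r le_vmax.
by rewrite P_shift; have := ha i; lra.
Qed.

Lemma iter_topical_ge a (w : vec) s i :
  (forall k, a <= P (fun _ => 0) k) -> vmin w + s%:R * a <= iter s P w i.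
Proof.
move=> ha; elim: s i => [|s IH] i; first by rewrite mul0r addr0 vmin_le.
rewrite iterS; apply: le_trans (topical_ge_vmin _ i ha).
have [k ->] := vmin_attained (iter s P w); have := IH k.
rewrite -natr1 mulrDl mul1r; lra.
Qed.

Lemma iter_topical_le a (w : vec) s i :
  (forall k, P (fun _ => 0) k <= a) -> iter s P w i <= vmax w + s%:R * a.
Proof.
move=> ha; elim: s i => [|s IH] i; first by rewrite mul0r addr0 le_vmax.
rewrite iterS; apply: le_trans (topical_le_vmax _ i ha) _.
have [k ->] := vmax_attained (iter s P w); have := IH k.
rewrite -natr1 mulrDl mul1r; lra.
Qed.

(* The averaged vector max_k (P^k u - k al), k <= K, turns the growth of the
   iterates into a one-step sub-eigenvector inequality. *)
Lemma subeigen_of_iter_ge (u : vec) K al (Q : pred 'I_n.+1) :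
  (forall i, Q i -> u i + K.+1%:R * al <= iter K.+1 P u i) ->
  exists v : vec, forall i, Q i -> v i + al <= P v i.
Proof.
move=> hu.
pose v : vec := fun i => \big[Num.max/u i]_(k < K.+1) (iter k P u i - k%:R * al).
exists v => i Qi.
have step k : (k < K.+1)%N -> iter k.+1 P u i - k%:R * al <= P v i.
  move=> kK; rewrite iterS -P_shift; apply: P_mono => j.
  exact: (@le_bigmax _ _ _ (u j) (fun k : 'I_K.+1 => iter k P u j - k%:R * al) (Ordinal kK)).
have := hu i Qi; have := step K (ltnSn K); rewrite -natr1 mulrDl mul1r => hK hu'.
rewrite -lerBrDr; apply: bigmax_le => [|[[|k] kK] _] /=; first lra.
  by rewrite mul0r subr0; lra.
have := step k (ltnW kK); rewrite !iterS -natr1 mulrDl mul1r; lra.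
Qed.

Lemma supereigen_of_iter_le (u : vec) K al :
  (forall i, iter K.+1 P u i <= u i + K.+1%:R * al) ->
  exists v : vec, forall i, P v i <= v i + al.
Proof.
move=> hu.
pose v : vec := fun i => \big[Num.min/u i]_(k < K.+1) (iter k P u i - k%:R * al).
exists v => i.
have step k : (k < K.+1)%N -> P v i <= iter k.+1 P u i - k%:R * al.
  move=> kK; rewrite iterS -P_shift; apply: P_mono => j.
  exact: (@bigmin_le _ _ _ (u j) (Ordinal kK) (fun k : 'I_K.+1 => iter k P u j - k%:R * al)).
have := hu i; have := step K (ltnSn K); rewrite -natr1 mulrDl mul1r => hK hu'.
rewrite -lerBlDr; apply: le_bigmin => [|[[|k] kK] _] /=; first lra.
  by rewrite mul0r subr0; lra.
have := step k (ltnW kK); rewrite !iterS -natr1 mulrDl mul1r; lra.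
Qed.

End Topical.

Definition one {R : realType} {n : nat} : 'I_n.+1 -> R := fun _ => 1.

Lemma one_pos {R : realType} {n : nat} : posvec (@one R n).
Proof. by move=> i; apply: ltr01. Qed.

Section CollatzWielandt.
Variables (R : realType) (n : nat).
Notation vec := ('I_n.+1 -> R).

Lemma ratio_le_max_ratio (g : vec -> vec) x i : g x i / x i <= max_ratio g x.
Proof. exact: le_bigmax. Qed.

Lemma max_ratio_le (g : vec -> vec) x b : (forall i, g x i / x i <= b) -> max_ratio g x <= b.
Proof. by move=> h; apply: bigmax_le => // i _. Qed.

Lemma min_ratio_le_ratio (g : vec -> vec) x i : min_ratio g x <= g x i / x i.
Proof. exact: bigmin_le. Qed.

Lemma le_min_ratio (g : vec -> vec) x b : (forall i, b <= g x i / x i) -> b <= min_ratio g x.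
Proof. by move=> h; apply: le_bigmin => // i _. Qed.

Lemma cw_r_le_max_ratio (g : vec -> vec) x : (forall y, posvec y -> 0 <= max_ratio g y) ->
  posvec x -> cw_r g <= max_ratio g x.
Proof.
move=> h px; apply: ge_inf; last by exists x.
by exists 0 => _ [y py <-]; apply: h.
Qed.

Lemma lb_le_cw_r (g : vec -> vec) b : (forall x, posvec x -> b <= max_ratio g x) -> b <= cw_r g.
Proof.
move=> h; apply: lb_le_inf; first by exists (max_ratio g one), one => //; apply: one_pos.
by move=> _ [y py <-]; apply: h.
Qed.

Lemma cw_r_lt_max_ratio (g : vec -> vec) b : cw_r g < b -> exists2 x, posvec x & max_ratio g x < b.
Proof.
move=> h; have [|_ [x px <-] hx] := @inf_lt _ [set max_ratio g x | x in @posvec R n] b _ h.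
  by exists (max_ratio g one), one => //; apply: one_pos.
by exists x.
Qed.

Lemma min_ratio_le_cw_lambda (g : vec -> vec) x B : (forall y, posvec y -> min_ratio g y <= B) ->
  posvec x -> min_ratio g x <= cw_lambda g.
Proof.
move=> h px; apply: ub_le_sup; last by exists x.
by exists B => _ [y py <-]; apply: h.
Qed.

Lemma cw_lambda_le_ub (g : vec -> vec) b : (forall x, posvec x -> min_ratio g x <= b) -> cw_lambda g <= b.
Proof.
move=> h; apply: ge_sup; first by exists (min_ratio g one), one => //; apply: one_pos.
by move=> _ [y py <-]; apply: h.
Qed.

End CollatzWielandt.

(** * Log coordinates and the graph of [f] *)

Section LogCoordinates.
Variables (R : realType) (n : nat).
Notation vec := ('I_n.+1 -> R).
Variable f : vec -> vec.
Hypotheses (fpos : forall x, posvec x -> posvec (f x))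
  (fop : order_preserving f) (fhom : homogeneous f) (fconv : mult_convex f).
Notation arc := (gf_arc f).

Definition logf (u : vec) : vec := fun i => ln (f (vexp u) i).
Definition vlog (x : vec) : vec := fun i => ln (x i).
Definition delta (j : 'I_n.+1) : vec := fun k => (k == j)%:R.

Lemma vexp_pos (u : vec) : posvec (vexp u).
Proof. by move=> i; apply: expR_gt0. Qed.

Lemma f_vexp (u : vec) i : f (vexp u) i = expR (logf u i).
Proof. by rewrite /logf lnK // posrE; apply/fpos/vexp_pos. Qed.

Lemma vexp_vlog (x : vec) : posvec x -> vexp (vlog x) = x.
Proof. by move=> px; apply: funext => i; rewrite /vexp /vlog lnK // posrE. Qed.

Lemma logf_mono (u v : vec) : (forall k, u k <= v k) -> forall i, logf u i <= logf v i.
Proof.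
move=> uv i; rewrite /logf ler_ln ?posrE; try by apply/fpos/vexp_pos.
by apply: fop; try apply: vexp_pos; move=> k; rewrite ler_expR.
Qed.

Lemma logf_shift (u : vec) t i : logf (fun k => u k + t) i = logf u i + t.
Proof.
rewrite /logf; have -> : vexp (fun k => u k + t) = (fun k => expR t * vexp u k).
  by apply: funext => k; rewrite /vexp expRD mulrC.
rewrite fhom ?expR_gt0 //; last exact: vexp_pos.
rewrite lnM ?posrE ?expR_gt0 //; last by apply/fpos/vexp_pos.
by rewrite expRK addrC.
Qed.

Lemma logf_convex_line (u w : vec) i a s t : 0 <= a <= 1 ->
  logf (fun k => u k + (a * s + (1 - a) * t) * w k) i <=
  a * logf (fun k => u k + s * w k) i + (1 - a) * logf (fun k => u k + t * w k) i.
Proof.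
move=> a01; have := fconv i (fun k => u k + s * w k) (fun k => u k + t * w k) a01.
congr (ln (f (vexp _) i) <= _); apply: funext => k; ring.
Qed.

Lemma delta_ge0 j k : 0 <= delta j k :> R.
Proof. by rewrite /delta; case: (k == j). Qed.

Lemma vexp_delta t j : vexp (fun k => t * delta j k) = exp_e t j.
Proof.
apply: funext => k; rewrite /vexp /exp_e /delta.
by case: (k == j); rewrite ?mulr1 ?mulr0 ?expR0.
Qed.

Lemma exp_e_pos (t : R) (j : 'I_n.+1) : posvec (exp_e t j).
Proof. rewrite -vexp_delta; exact: vexp_pos. Qed.

Lemma logf_line_nondecr (u : vec) j i :
  {homo (fun t => logf (fun k => u k + t * delta j k) i) : s t / s <= t}.
Proof.
move=> s t st; apply: logf_mono => k; rewrite lerD2l.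
by apply: ler_wpM2r => //; apply: delta_ge0.
Qed.


Lemma f_exp_e_nondecr i j : {homo (fun t => f (exp_e t j) i) : s t / s <= t}.
Proof.
move=> s t st; apply: fop; try exact: exp_e_pos.
by move=> k; rewrite /exp_e; case: (k == j); rewrite ?ler_expR.
Qed.

Lemma noarc_bounded i j : ~ arc i j -> exists B, forall t, f (exp_e t j) i <= B.
Proof.
move=> na; apply: contrapT => nb; apply: na; apply/cvgryPge => B.
have /existsNP [t0 /negP] : ~ (forall t, f (exp_e t j) i <= B).
  by move=> h; apply: nb; exists B.
rewrite -ltNge => ht0; exists t0; split; first exact: num_real.
move=> t /ltW t0t; apply/ltW/(lt_le_trans ht0); exact: f_exp_e_nondecr.
Qed.

Lemma logf_delta t j i : logf (fun k => t * delta j k) i = ln (f (exp_e t j) i).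
Proof. by rewrite /logf vexp_delta. Qed.

Lemma noarc_logf_const i j : ~ arc i j ->
  forall (u : vec) s, logf (fun k => u k + s * delta j k) i = logf u i.
Proof.
move=> na; have [B HB] := noarc_bounded na.
have key (u : vec) s : 0 <= s -> logf (fun k => u k + s * delta j k) i = logf u i.
  move=> s0; pose phi t := logf (fun k => u k + t * delta j k) i.
  have -> : logf u i = phi 0.
    by rewrite /phi; congr (logf _ i); apply: funext => k; rewrite mul0r addr0.
  change (phi s = phi 0); apply: (@convex_bounded_const _ phi _ _ (vmax u + ln B)) => //.
  - by move=> a s' t a01; apply: logf_convex_line.
  - exact: logf_line_nondecr.
  move=> t t0; apply: le_trans (logf_mono (v := fun k => t * delta j k + vmax u) _ i) _.
    by move=> k; rewrite addrC lerD2l le_vmax.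
  have fp : 0 < f (exp_e t j) i by apply: fpos; apply: exp_e_pos.
  rewrite logf_shift logf_delta addrC lerD2l ler_ln ?posrE ?HB //.
  exact: lt_le_trans fp (HB t).
move=> u s; have [s0|s0] := leP 0 s; first exact: key.
rewrite -(key (fun k => u k + s * delta j k) (- s)) ?oppr_ge0 ?ltW //.
by congr (logf _ i); apply: funext => k; ring.
Qed.

Lemma logf_local (u v : vec) i : (forall k, arc i k -> u k = v k) -> logf u i = logf v i.
Proof.
move=> uv.
pose w (m : nat) : vec := fun k => if (k < m)%N then v k else u k.
suff wm m : logf (w m) i = logf u i.
  by rewrite -(wm n.+1); congr (logf _ i); apply: funext => k; rewrite /w ltn_ord.
elim: m => [|m IH].
  by congr (logf _ i); apply: funext => k; rewrite /w ltn0.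
rewrite -IH; have [mn|nm] := ltnP m n.+1; last first.
  congr (logf _ i); apply: funext => k; rewrite /w.
  by rewrite (leq_trans (ltn_ord k) nm) (ltn_trans (ltn_ord k)).
pose km := Ordinal mn.
have -> : w m.+1 = (fun k => w m k + (v km - u km) * delta km k).
  apply: funext => k; rewrite /w /delta ltnS leq_eqVlt.
  have [->|nk] := eqVneq k km; first by rewrite eqxx ltnn mulr1 addrC subrK.
  have -> : (nat_of_ord k == m) = false by apply: contraNF nk => /eqP e; apply/eqP/val_inj.
  by rewrite mulr0 addr0.
have [a|na] := pselect (arc i km); last exact: noarc_logf_const.
by rewrite (uv _ a) subrr; congr (logf _ i); apply: funext => k; rewrite mul0r addr0.
Qed.

Lemma f_local (x y : vec) i : posvec x -> posvec y ->
  (forall k, arc i k -> x k = y k) -> f x i = f y i.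
Proof.
move=> px py xy; rewrite -(vexp_vlog px) -(vexp_vlog py) !f_vexp; congr expR.
by apply: logf_local => k /xy; rewrite /vlog => ->.
Qed.

Lemma arc_large i j : arc i j -> forall B, exists2 t, 1 <= t & B <= f (exp_e t j) i.
Proof.
move=> a B; have [M [_ HM]] := cvgry_ge a B.
have M1 : M <= Num.max M 0 by rewrite le_max lexx.
have M2 : 0 <= Num.max M 0 by rewrite le_max lexx orbT.
by exists (Num.max M 0 + 1); [lra | apply: HM; lra].
Qed.

Lemma arc_logf_linear i j : arc i j -> exists c K, [/\ 0 < c, c <= 1, 0 <= K &
  forall t, 0 <= t -> c * t - K <= logf (fun k => t * delta j k) i].
Proof.
move=> a; pose phi t := logf (fun k => 0 + t * delta j k) i.
have ephi t : phi t = logf (fun k => t * delta j k) i.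
  by rewrite /phi; congr (logf _ i); apply: funext => k; rewrite add0r.
have [t1 t11 ht1] := arc_large a (expR (phi 0 + 1)).
have t10 : 0 < t1 by apply: lt_le_trans ltr01 t11.
have h1 : phi 0 + 1 <= phi t1.
  have fp : 0 < f (exp_e t1 j) i by apply/fpos/exp_e_pos.
  by rewrite (ephi t1) logf_delta -ler_expR lnK // posrE.
have lb : forall t, 0 <= t -> phi 0 + t / t1 - 1 <= phi t.
  apply: convex_linear_lb => //.
  - by move=> a' s t a01; apply: (logf_convex_line (fun _ => 0)).
  - exact: (logf_line_nondecr (fun _ => 0)).
exists t1^-1, (1 + `|phi 0|); split => [|||t t0].
- by rewrite invr_gt0.
- by rewrite invf_le1.
- by rewrite addr_ge0.
have : - `|phi 0| <= phi 0 by rewrite lerNl -normrN ler_norm.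
by rewrite -ephi; have := lb t t0; rewrite mulrC; lra.
Qed.

Definition arc_growth c K := forall i j, arc i j ->
  forall t, 0 <= t -> c * t - K <= logf (fun k => t * delta j k) i.

Lemma arc_growth_exists : exists c K, [/\ 0 < c, c <= 1, 0 <= K & arc_growth c K].
Proof.
pose Q (p : R * R) := [/\ 0 < p.1, p.1 <= 1 & 0 <= p.2].
pose P (ij : 'I_n.+1 * 'I_n.+1) (p : R * R) := arc ij.1 ij.2 ->
  forall t, 0 <= t -> p.1 * t - p.2 <= logf (fun k => t * delta ij.2 k) ij.1.
have [[c K] [c0 c1 K0] H] : exists2 p, Q p & forall ij, P ij p.
  apply: (@finite_directed_choice _ _ Q (fun p q => (p.1 * q.1, p.2 + q.2)) (1, 0)).
  - by split => //=; apply: ltr01.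
  - move=> [c K] [d L] [/= c0 c1 K0] [/= d0 d1 L0]; split => /=.
    + exact: mulr_gt0.
    + by rewrite mulr_ile1 // ltW.
    + exact: addr_ge0.
  - by move=> p q; rewrite mulrC addrC.
  - move=> ij [c K] [d L] [/= c0 _ _] [/= _ d1 L0] H a t t0 /=.
    apply: le_trans (H a t t0); rewrite /= -mulrA.
    by have := ler_wpM2l (ltW c0) (ler_piMl t0 d1); lra.
  - move=> [i j]; have [a|na] := pselect (arc i j); last by exists (1, 0) => //; split => //=.
    have [c [K [c0 c1 K0 H]]] := arc_logf_linear a.
    by exists (c, K); [split | move=> _; apply: H].
by exists c, K; split => // i j; exact: (H (i, j)).
Qed.

Lemma logf_ge_arc c K (u : vec) m i j : arc_growth c K -> arc i j ->
  (forall k, m <= u k) -> m + c * (u j - m) - K <= logf u i.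
Proof.
move=> cK a mu.
have : logf (fun k => (u j - m) * delta j k + m) i <= logf u i.
  apply: logf_mono => k; rewrite /delta; have [->|_] := eqVneq k j.
    by rewrite mulr1 subrK.
  by rewrite mulr0 add0r.
rewrite logf_shift; have := cK i j a (u j - m); rewrite subr_ge0 => /(_ (mu j)); lra.
Qed.

(* An arc passes on a fraction [c] of the excess over the lower bound [m]. *)
Lemma walk_propagation c K (w : nat -> vec) (X : {set 'I_n.+1}) m T :
  arc_growth c K -> 0 < c -> c <= 1 -> 0 <= K -> closed arc X ->
  (forall s k, (s <= T)%N -> m <= w s k) ->
  (forall s j, j \in X -> logf (w s) j <= w s.+1 j) ->
  forall d j l, walk arc d j l -> j \in X -> forall t, (t + d <= T)%N ->
  m + c ^+ d * (w t l - m) - d%:R * K <= w (t + d)%N j.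
Proof.
move=> cK c0 c1 K0 cX wm wX d j l; elim=> {d j l} [j|d j j1 l a _ IH] jX t tT.
  by rewrite addn0 expr0 mul1r mul0r subr0 addrC subrK.
move: tT; rewrite addnS => /ltnW tT.
have IH1 := IH (cX j j1 jX a) t tT.
have hX := logf_ge_arc cK a (fun k => wm (t + d)%N k tT).
apply: le_trans (wX _ _ jX).
have := ler_wpM2l (ltW c0) IH1.
have : c * (d%:R * K) <= d%:R * K by rewrite ler_piMl // mulr_ge0.
rewrite exprS -natr1; lra.
Qed.

(** * The restrictions [f^C_0] *)

Lemma ext_ge0 (z : vec) i : (forall j, 0 <= z j) -> 0 <= ext f z i.
Proof.
move=> z0; apply: lb_le_inf; first by exists (f (fun j => z j + 1) i), 1 => //; apply: ltr01.
move=> _ [e /= e0 <-]; apply/ltW/fpos => j; exact: ltr_wpDl.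
Qed.

Lemma ext_le (z : vec) e i : (forall j, 0 <= z j) -> 0 < e -> ext f z i <= f (fun j => z j + e) i.
Proof.
move=> z0 e0; apply: ge_inf; last by exists e.
exists 0 => _ [e' /= e'0 <-]; apply/ltW/fpos => j; exact: ltr_wpDl.
Qed.

Lemma f_shift_le (x : vec) e i : posvec x -> 0 < e ->
  f (fun j => x j + e) i <= (1 + e / vmin x) * f x i.
Proof.
move=> px e0; have m0 := vmin_gt0 px; set t := 1 + e / vmin x.
have t0 : 0 < t by rewrite ltr_wpDr ?ltr01 // ltW // divr_gt0.
apply: (@le_trans _ _ (f (fun j => t * x j) i)); last by rewrite (fhom px t0).
apply: fop => j; first by rewrite ltr_wpDr ?px // ltW.
  by rewrite mulr_gt0 ?px.
rewrite /t mulrDl mul1r lerD2l.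
have q : 0 <= e / vmin x by rewrite divr_ge0 // ltW.
by have := ler_wpM2l q (vmin_le x j); rewrite divfK ?gt_eqF.
Qed.

Lemma ext_le_f (z x : vec) i : posvec x -> (forall j, 0 <= z j <= x j) -> ext f z i <= f x i.
Proof.
move=> px zx; have z0 j : 0 <= z j by case/andP: (zx j).
apply/ler_addgt0Pr => eta eta0; have fx0 : 0 < f x i by apply: fpos.
have m0 := vmin_gt0 px.
have [e e0 He] : exists2 e, 0 < e & e / vmin x * f x i = eta.
  exists (eta * vmin x / f x i); first by rewrite divr_gt0 // mulr_gt0.
  by field; rewrite (gt_eqF m0) (gt_eqF fx0).
have zx_e : f (fun j => z j + e) i <= f (fun j => x j + e) i.
  apply: fop => j; rewrite ?lerD2r; try by case/andP: (zx j).
    by rewrite ltr_wpDl.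
  by rewrite ltr_wpDl // ltW.
apply: le_trans (ext_le i z0 e0) _; apply: le_trans zx_e _.
by apply: le_trans (f_shift_le i px e0) _; rewrite mulrDl mul1r He.
Qed.

Lemma proj0_ge0 (C : set 'I_n.+1) (x : vec) j : (forall j, 0 <= x j) -> 0 <= proj0 C x j.
Proof. by move=> x0; rewrite /proj0; case: ifP. Qed.

Lemma restr0_ge0 (C : set 'I_n.+1) (x : vec) i :
  (forall j, 0 <= x j) -> 0 <= restr0 f C x i.
Proof. by move=> x0; apply: proj0_ge0 => j; apply: ext_ge0 => k; apply: proj0_ge0. Qed.

Lemma max_ratio_restr0_ge0 (C : set 'I_n.+1) (y : vec) :
  posvec y -> 0 <= max_ratio (restr0 f C) y.
Proof.
move=> py; apply: le_trans (ratio_le_max_ratio _ _ ord0).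
by apply: divr_ge0 (ltW (py _)); apply: restr0_ge0 => j; apply: ltW.
Qed.

Lemma restr0_le_f (C : set 'I_n.+1) (x : vec) i : posvec x -> restr0 f C x i <= f x i.
Proof.
move=> px; rewrite /restr0 {1}/proj0; case: ifP => _; last exact/ltW/fpos.
by apply: ext_le_f => // j; rewrite /proj0; case: ifP => _; rewrite ?lexx ?ltW.
Qed.

Lemma cw_r_restr0_le (C : set 'I_n.+1) : cw_r (restr0 f C) <= cw_r f.
Proof.
apply: lb_le_cw_r => x px; apply: le_trans (cw_r_le_max_ratio (@max_ratio_restr0_ge0 C) px) _.
apply: max_ratio_le => i; apply: le_trans (ratio_le_max_ratio f x i).
by apply: ler_wpM2r; [rewrite invr_ge0 ltW | exact: restr0_le_f].
Qed.

Lemma cw_r_restr0_le_expR (C : set 'I_n.+1) g (v : vec) :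
  (forall i, i \in C -> logf v i <= v i + g) -> cw_r (restr0 f C) <= expR g.
Proof.
move=> h; apply: le_trans (cw_r_le_max_ratio (@max_ratio_restr0_ge0 C) (vexp_pos v)) _.
apply: max_ratio_le => i; rewrite ler_pdivrMr; last exact: vexp_pos.
have [iC|iC] := boolP (i \in C); last first.
  rewrite /restr0 /proj0 (negPf iC); apply: mulr_ge0; apply: ltW.
    exact: expR_gt0.
  exact: vexp_pos.
apply: le_trans (restr0_le_f C i (vexp_pos v)) _.
by rewrite f_vexp /vexp mulrC -expRD ler_expR h.
Qed.

(* By locality [f x k] only sees [C], where [x <= t * (proj0 C y + e)]. *)
Lemma f_le_ext_scaled (C : set 'I_n.+1) (x y : vec) t k :
  (forall i j, i \in C -> arc i j -> j \in C) -> posvec x -> posvec y -> 0 < t ->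
  (forall j, j \in C -> x j <= t * y j) -> k \in C ->
  f x k <= t * ext f (proj0 C y) k.
Proof.
move=> cC px py t0 xty kC; rewrite -ler_pdivrMl //.
apply: lb_le_inf; first by exists (f (fun j => proj0 C y j + 1) k), 1 => //; apply: ltr01.
move=> _ [e /= e0 <-].
pose z : vec := fun j => if j \in C then y j + e else x j / t.
have pz : posvec z by move=> j; rewrite /z; case: ifP => _; rewrite ?ltr_wpDr ?divr_gt0 ?ltW.
have -> : f (fun j => proj0 C y j + e) k = f z k.
  apply: f_local => [j|//|j a]; last by rewrite /proj0 /z (cC k j kC a).
  by rewrite /proj0; case: ifP => _; rewrite ?add0r ?ltr_wpDr ?ltW.
rewrite ler_pdivrMl // -[t * f z k]/((fun i => t * f z i) k) -(fhom pz t0).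
apply: fop => // [j|j]; first by rewrite mulr_gt0.
rewrite /z; case: ifPn => jC; last by rewrite mulrC divfK ?gt_eqF.
apply: le_trans (xty j jC) _; apply: ler_wpM2l; first exact: ltW.
by rewrite lerDl ltW.
Qed.

Lemma cw_lambda_le_closed (C : set 'I_n.+1) i0 : i0 \in C ->
  (forall i j, i \in C -> arc i j -> j \in C) -> cw_lambda f <= cw_r (restr0 f C).
Proof.
move=> i0C cC; apply: cw_lambda_le_ub => x px; apply: lb_le_cw_r => y py.
pose F k := x k / y k.
have F0 k : 0 <= F k by rewrite divr_ge0 ?ltW.
have [k kC tk] := @eq_bigmax _ _ _ 0 i0 (fun k => k \in C) F i0C (fun k _ => F0 k).
set t := \big[Num.max/0]_(k | k \in C) F k in tk.
have t0 : 0 < t by rewrite tk divr_gt0.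
have xty j : j \in C -> x j <= t * y j.
  by move=> jC; rewrite -ler_pdivrMr // /t; apply: le_bigmax_cond.
apply: le_trans (min_ratio_le_ratio f x k) _; apply: le_trans (ratio_le_max_ratio _ y k).
rewrite /restr0 /proj0 kC ler_pdivrMr // (_ : x k = t * y k); last by rewrite tk /F divfK ?gt_eqF.
rewrite (mulrC t) mulrA divfK ?gt_eqF // mulrC.
exact: f_le_ext_scaled.
Qed.

(** * Upper bound for [r] *)

Lemma restr0_strict_approx (C : set 'I_n.+1) b : cw_r (restr0 f C) < b ->
  exists y e, [/\ posvec y, 0 < e &
    forall k, k \in C -> f (fun j => proj0 C y j + e) k < b * y k].
Proof.
move=> /cw_r_lt_max_ratio [y py hy]; have y0 j : 0 <= proj0 C y j.
  by apply: proj0_ge0 => l; apply: ltW.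
pose P k e := k \in C -> f (fun j => proj0 C y j + e) k < b * y k.
suff [e e0 He] : exists2 e, 0 < e & forall k, P k e by exists y, e; split.
apply: (@finite_directed_choice _ _ (fun e => 0 < e) Num.min 1) => //.
- by move=> u v u0 v0; rewrite lt_min u0 v0.
- exact: minC.
- move=> k u v u0 v0 Pu kC; apply: le_lt_trans (Pu kC); apply: fop => j.
  + by rewrite ltr_wpDl // lt_min u0 v0.
  + by rewrite ltr_wpDl.
  + by rewrite lerD2l ge_min lexx.
move=> k; have [kC|kC] := boolP (k \in C); last by exists 1 => //; rewrite /P (negPf kC).
have : ext f (proj0 C y) k < b * y k.
  have := le_lt_trans (ratio_le_max_ratio _ y k) hy.
  by rewrite /restr0 {1}/proj0 kC ltr_pdivrMr // mulrC.
case/inf_lt; first by exists (f (fun j => proj0 C y j + 1) k), 1 => //; apply: ltr01.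
by move=> _ [e /= e0 <-] h; exists e.
Qed.

(* Scaled by [e / \sum x'], the vector [x'] stays below [e], so on [C] the glued
   vector is below [proj0 C y + e]; by locality [S'] only sees the scaled [x']. *)
Lemma supervector_glue b (C : set 'I_n.+1) (S' : {set 'I_n.+1}) (y x' : vec) e :
  posvec y -> posvec x' -> 0 < e -> closed arc S' -> (forall j, j \in S' -> j \notin C) ->
  (forall k, k \in C -> f (fun j => proj0 C y j + e) k < b * y k) ->
  (forall k, k \in S' -> f x' k <= b * x' k) ->
  exists2 x, posvec x & forall k, k \in C \/ k \in S' -> f x k <= b * x k.
Proof.
move=> py px' e0 cS' S'C hy hx'.
have sx0 : 0 < \sum_l x' l := lt_le_trans (px' ord0) (le_vsum ord0 px').
pose d := e / \sum_l x' l.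
have d0 : 0 < d by rewrite divr_gt0.
pose x : vec := fun j => if j \in C then y j else d * x' j.
have px : posvec x by move=> j; rewrite /x; case: ifP => _; [apply: py | apply: mulr_gt0].
exists x => // k [kC|kS'].
  rewrite {2}/x kC; apply/ltW/(le_lt_trans _ (hy k kC)); apply: fop => // [j|j].
    by rewrite ltr_wpDl ?proj0_ge0 // => l; apply: ltW.
  rewrite /x /proj0; case: ifP => _; first by rewrite lerDl ltW.
  by rewrite add0r /d mulrAC ler_pdivrMr // ler_pM2l // le_vsum.
have -> : f x k = f (fun j => d * x' j) k.
  apply: f_local => // [j|j a]; first exact: mulr_gt0.
  by rewrite /x (negPf (S'C j (cS' k j kS' a))).
rewrite (fhom px' d0) /x (negPf (S'C k kS')) mulrCA ler_pM2l //; exact: hx'.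
Qed.

Lemma supervector_closed rho eps : 0 < eps ->
  (forall i, cw_r (restr0 f (scc arc i)) <= rho) ->
  forall S, closed arc S ->
  exists2 x, posvec x & forall k, k \in S -> f x k <= (rho + eps) * x k.
Proof.
move=> eps0 hrho; apply: closed_ind => [|S i _ _ cS' [x' px' hx']].
  by exists one => [|k]; [apply: one_pos | rewrite inE].
have ri : cw_r (restr0 f (scc arc i)) < rho + eps by rewrite (le_lt_trans (hrho i)) ?ltrDl.
have [y [e [py e0 hy]]] := restr0_strict_approx ri.
have [|x px hx] := supervector_glue py px' e0 cS' _ hy hx'.
  by move=> j; rewrite !inE => /andP[].
exists x => // k kS; apply: hx.
by have [kC|kC] := boolP (k \in scc arc i); [left | right; rewrite !inE kC].
Qed.

Lemma max_ratio_ge0 (x : vec) : posvec x -> 0 <= max_ratio f x.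
Proof.
move=> px; apply: le_trans (ratio_le_max_ratio f x ord0).
by apply: ltW; apply: divr_gt0; [apply: fpos | apply: px].
Qed.

Lemma cw_r_le_of_scc_bound rho :
  (forall i, cw_r (restr0 f (scc arc i)) <= rho) -> cw_r f <= rho.
Proof.
move=> hrho; apply/ler_addgt0Pr => eps eps0.
have [x px hx] := supervector_closed eps0 hrho closed_setT.
apply: le_trans (cw_r_le_max_ratio max_ratio_ge0 px) _; apply: max_ratio_le => j.
by rewrite ler_pdivrMr //; apply: hx; rewrite inE.
Qed.

Lemma cw_r_eq_max_scc : exists2 C, is_scc arc C & cw_r f = cw_r (restr0 f C).
Proof.
have [k _ hk] := @arg_maxP _ _ 'I_n.+1 ord0 xpredT
  (fun i => cw_r (restr0 f (scc arc i))) isT.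
exists (scc arc k); first by exists k.
by apply/le_anti; rewrite cw_r_restr0_le cw_r_le_of_scc_bound // => i; apply: hk.
Qed.

(** * Final classes *)

Section FinalClass.
Variables (i : 'I_n.+1) (a c K : R) (D : nat).
Let C : {set 'I_n.+1} := [set j | j \in scc arc i]%SET.
Hypotheses (closedC : closed arc C) (a_le0 : a <= 0).
Hypotheses (cK : arc_growth c K) (c0 : 0 < c) (c1 : c <= 1) (K0 : 0 <= K).
Hypotheses (D0 : (0 < D)%N)
  (hD : forall j l, reach arc j l -> exists2 d, (d <= D)%N & walk arc d j l).

Lemma i_in_C : i \in C.
Proof. by rewrite inE scc_refl. Qed.

(* Copying coordinate [i] outside [C] keeps the extremes of the iterates inside
   [C]; the drift [a] lets lower bounds on [C] survive extra iterations. *)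
Definition aug (u : vec) : vec := fun j =>
  let j' := if j \in C then j else i in Num.max (logf u j') (u j' + a).

Lemma aug_mono (u v : vec) : (forall k, u k <= v k) -> forall j, aug u j <= aug v j.
Proof. by move=> uv j; rewrite /aug le_max2 ?logf_mono ?lerD2r. Qed.

Lemma aug_shift (u : vec) t j : aug (fun k => u k + t) j = aug u j + t.
Proof. by rewrite /aug logf_shift addr_maxl addrAC. Qed.

Lemma aug_ge_logf (u : vec) j : j \in C -> logf u j <= aug u j.
Proof. by move=> jC; rewrite /aug jC le_max lexx. Qed.

Lemma aug_ge_drift (u : vec) j : j \in C -> u j + a <= aug u j.
Proof. by move=> jC; rewrite /aug jC le_max lexx orbT. Qed.

Lemma aug_out (u : vec) j : j \notin C -> aug u j = aug u i.
Proof. by move=> jC; rewrite /aug (negPf jC) i_in_C. Qed.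

Definition orbit k := iter k aug (fun _ => 0).

Lemma orbitS k : orbit k.+1 = aug (orbit k).
Proof. by rewrite /orbit iterS. Qed.

Lemma orbitD k s : orbit (k + s) = iter s aug (orbit k).
Proof. by rewrite /orbit addnC iterD. Qed.

Lemma orbit_max_in_class k : exists2 l, l \in C & orbit k l = vmax (orbit k).
Proof.
have [l ->] := vmax_attained (orbit k).
have [lC|lC] := boolP (l \in C); first by exists l.
by exists i; rewrite ?i_in_C //; case: k => // k; rewrite orbitS (aug_out _ lC).
Qed.

Lemma orbit_drift k s j : j \in C -> orbit k j + s%:R * a <= orbit (k + s) j.
Proof.
move=> jC; elim: s => [|s IH]; first by rewrite addn0 mul0r addr0.
rewrite addnS orbitS; apply: le_trans (aug_ge_drift _ jC).
by move: IH; rewrite -natr1 mulrDl mul1r; lra.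
Qed.

Lemma aug0_ge k : a <= aug (fun _ => 0) k.
Proof.
have h j : j \in C -> a <= aug (fun _ => 0) j.
  by move=> jC; have := aug_ge_drift (fun _ => 0) jC; rewrite add0r.
by have [/h //|kC] := boolP (k \in C); rewrite aug_out //; apply: h i_in_C.
Qed.

Lemma orbit_window k s j : (s <= D)%N -> vmin (orbit k) + D%:R * a <= orbit (k + s) j.
Proof.
move=> sD; rewrite orbitD; apply: le_trans (iter_topical_ge aug_mono aug_shift _ _ _ aug0_ge).
by rewrite lerD2l ler_wnM2r // ler_nat.
Qed.

Local Notation low k := (vmin (orbit k) + D%:R * a).

Lemma orbit_class_lb k j : j \in C ->
  low k + c ^+ D * (vmax (orbit k) - low k) - D%:R * (K - a) <= orbit (k + D) j.
Proof.
move=> jC; have [l lC lmax] := orbit_max_in_class k.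
have [d dD wjl] : exists2 d, (d <= D)%N & walk arc d j l.
  by apply: hD; apply: (@scc_reach _ _ i); [move: jC | move: lC]; rewrite !inE.
have step s j' : j' \in C -> logf (orbit (k + s)) j' <= orbit (k + s.+1) j'.
  by move=> j'C; rewrite addnS orbitS; apply: aug_ge_logf.
have := walk_propagation cK c0 c1 K0 closedC (w := fun s => orbit (k + s)) (m := low k)
  (fun s k' sD => orbit_window k k' sD) step wjl jC (t := 0).
rewrite add0n addn0 lmax => /(_ dD) prop.
have := orbit_drift (k + d) (D - d) jC; rewrite -addnA subnKC // natrB //.
have Da : D%:R * a <= 0 by rewrite mulr_ge0_le0.
have Mm : 0 <= vmax (orbit k) - low k.
  by have := vmin_le (orbit k) ord0; have := le_vmax (orbit k) ord0; lra.
have cDd : c ^+ D * (vmax (orbit k) - low k) <= c ^+ d * (vmax (orbit k) - low k).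
  by apply: ler_wpM2r => //; apply: ler_wiXn2l => //; rewrite ltW.
have dK : d%:R * K <= D%:R * K by rewrite ler_wpM2r // ler_nat.
have da : d%:R * a <= 0 by rewrite mulr_ge0_le0.
lra.
Qed.

Lemma orbit_spread_contraction k :
  vmin (orbit k) + c ^+ D * (vmax (orbit k) - vmin (orbit k)) - D%:R * (K - a - a)
    <= vmin (orbit (k + D)).
Proof.
have lb j : j \in C -> vmin (orbit k) + c ^+ D * (vmax (orbit k) - vmin (orbit k))
    - D%:R * (K - a - a) <= orbit (k + D) j.
  move=> jC; apply: le_trans (orbit_class_lb k jC).
  have : 0 <= c ^+ D * - (D%:R * a).
    by apply: mulr_ge0; [apply: exprn_ge0; apply: ltW | rewrite oppr_ge0 mulr_ge0_le0].
  lra.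
have [j ->] := vmin_attained (orbit (k + D)).
have [/lb //|jC] := boolP (j \in C).
by rewrite -(prednK D0) addnS orbitS aug_out // -orbitS -addnS prednK //; apply: lb i_in_C.
Qed.

Lemma orbit_gap_bounded : exists B, forall k, vmax (orbit k) - vmin (orbit k) <= B.
Proof.
apply: (@gap_bounded_of_contraction _ _ _ D (D%:R * vmax (aug (fun _ => 0))) _ (c ^+ D) D0
  (exprn_gt0 D c0) (exprn_ile1 D (ltW c0) c1) _ orbit_spread_contraction).
move=> k; have [j ->] := vmax_attained (orbit (k + D)); rewrite orbitD.
exact: (iter_topical_le aug_mono aug_shift _ _ j (le_vmax (aug (fun _ => 0)))).
Qed.

Lemma orbit_grows gm : expR gm < cw_r (restr0 f (scc arc i)) ->
  forall k, exists j, k.+1%:R * gm < orbit k.+1 j.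
Proof.
move=> hgm k; apply: contrapT => /forallNP hn.
have [v hv] : exists v, forall j, aug v j <= v j + gm.
  apply: (supereigen_of_iter_le aug_mono aug_shift (u := fun _ => 0) (K := k)) => j.
  by rewrite add0r leNgt; apply/negP; apply: hn.
have : cw_r (restr0 f (scc arc i)) <= expR gm.
  by apply: cw_r_restr0_le_expR => j jC; apply: le_trans (aug_ge_logf _ _) (hv j); rewrite inE.
by rewrite leNgt hgm.
Qed.

Lemma orbit_subvector al : a < al -> expR al < cw_r (restr0 f (scc arc i)) ->
  exists v : vec, forall j, j \in C -> v j + al <= logf v j.
Proof.
set r := cw_r _ => a_al al_r; have r0 : 0 < r := lt_trans (expR_gt0 al) al_r.
pose gm := (al + ln r) / 2.
have al_lnr : al < ln r by rewrite -ltr_expR lnK // posrE.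
have hgm : expR gm < r by rewrite -[X in _ < X](lnK (r0 : r \is Num.pos)) ltr_expR /gm; lra.
have [B hB] := orbit_gap_bounded.
pose x := Num.max B 0 / (gm - al).
have x0 : 0 <= x by rewrite divr_ge0 // ?le_max ?lexx ?orbT // subr_ge0 /gm; lra.
pose N := Num.bound x; have [j0 hj0] := orbit_grows hgm N.
have gal : 0 < gm - al by rewrite subr_gt0 /gm; lra.
have BN : B <= N.+1%:R * (gm - al).
  have Bx : Num.max B 0 = x * (gm - al) by rewrite /x divfK ?gt_eqF.
  have : x * (gm - al) <= N.+1%:R * (gm - al).
    apply: ler_wpM2r; first exact: ltW.
    by apply/ltW/(lt_le_trans (archi_boundP x0)); rewrite ler_nat.
  have : B <= Num.max B 0 by rewrite le_max lexx.
  lra.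
have lbN j : 0 + N.+1%:R * al <= iter N.+1 aug (fun _ => 0) j.
  have := hB N.+1; have := vmin_le (orbit N.+1) j; have := le_vmax (orbit N.+1) j0.
  rewrite /orbit mulrBr in BN hj0 *; lra.
have [v hv] := subeigen_of_iter_ge aug_mono aug_shift (Q := predT) (fun j _ => lbN j).
exists v => j jC; have := hv j isT; rewrite /aug jC le_max => /orP[//|]; lra.
Qed.

End FinalClass.

Lemma final_class_subvector i g0 : closed arc [set j | j \in scc arc i]%SET ->
  0 < g0 -> g0 < cw_r (restr0 f (scc arc i)) ->
  exists v : vec, forall j, j \in scc arc i -> v j + ln g0 <= logf v j.
Proof.
move=> cC g00 g0r; have [c [K [c0 c1 K0 cK]]] := arc_growth_exists.
have [D D0 hD] := reach_walk_bounded arc.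
have [a [a_le0 a_lt]] : exists a, a <= 0 /\ a < ln g0.
  have := normr_ge0 (ln g0); have : - `|ln g0| <= ln g0 by rewrite lerNl -normrN ler_norm.
  by exists (- (`|ln g0| + 1)); split; lra.
have [|v hv] := orbit_subvector cC a_le0 cK c0 c1 K0 D0 hD a_lt; first by rewrite lnK.
by exists v => j jC; apply: hv; rewrite inE.
Qed.

(** * Lower bound for [lambda] *)

Section Extension.
Variables (X S' : {set 'I_n.+1}) (u' : vec) (al c K a1 T : R) (D : nat).
Hypotheses (cS' : closed arc S') (hu' : forall k, k \in S' -> u' k + al <= logf u' k).
Hypothesis reach_S' : forall j, j \in X -> exists2 l, l \in S' & reach arc j l.
Hypotheses (cK : arc_growth c K) (c0 : 0 < c) (c1 : c <= 1) (K0 : 0 <= K).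
Hypotheses (D0 : (0 < D)%N)
  (hD : forall j l, reach arc j l -> exists2 d, (d <= D)%N & walk arc d j l).
Hypotheses (a1_le0 : a1 <= 0) (a1_le_al : a1 <= al)
  (a1_le_logf0 : forall k, a1 <= logf (fun _ => 0) k).
Local Notation b0 := (vmin u' - D%:R * `|al|).
Hypotheses (T_ge : - vmin u' <= T)
  (T_large : D%:R * (al - a1) + D%:R * K <= c ^+ D * (b0 + T - D%:R * a1)).

Definition start : vec := fun j => if j \in S' then u' j else - T.

Definition climb t := iter t logf start.

Lemma climb_on_S' t j : j \in S' -> u' j + t%:R * al <= climb t j.
Proof.
elim: t j => [|t IH] j jS'; first by rewrite mul0r addr0 /climb /= /start jS'.
rewrite /climb iterS -/(climb t).
have : logf (fun k => if k \in S' then u' k + t%:R * al else climb t k) j <= logf (climb t) j.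
  by apply: logf_mono => k; case: ifP => // kS'; apply: IH.
rewrite (@logf_local _ (fun k => u' k + t%:R * al)); last first.
  by move=> k a; rewrite (cS' jS' a).
by rewrite logf_shift -natr1 mulrDl mul1r; have := hu' jS'; lra.
Qed.

Lemma climb_window t j : (t <= D)%N -> - T + D%:R * a1 <= climb t j.
Proof.
move=> tD; apply: le_trans (iter_topical_ge logf_mono logf_shift _ _ j a1_le_logf0).
apply: lerD; last by rewrite ler_wnM2r // ler_nat.
have [k ->] := vmin_attained start; rewrite /start /=.
case: ifP => kS'; last exact: lexx.
by apply: le_trans _ (vmin_le u' k); rewrite lerNl.
Qed.

Lemma climb_S'_lb t l : l \in S' -> (t <= D)%N -> b0 <= climb t l.
Proof.
move=> lS' tD; apply: le_trans (climb_on_S' t lS').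
have : t%:R * `|al| <= D%:R * `|al| by rewrite ler_wpM2r ?ler_nat.
have : - (t%:R * `|al|) <= t%:R * al by rewrite -mulrN ler_wpM2l // lerNl -normrN ler_norm.
have := vmin_le u' l; lra.
Qed.

(* [j] is pulled up along a walk into [S'], where the iterates stay above [b0];
   [T_large] makes this pull beat [D] steps of growth [al] from [- T]. *)
Lemma climb_reach j : j \in X -> start j + D%:R * al <= climb D j.
Proof.
move=> jX; have [jS'|jS'] := boolP (j \in S').
  by rewrite /start jS'; apply: climb_on_S'.
have [l lS' rjl] := reach_S' jX; have [d dD wjl] := hD rjl.
have step s k : k \in [set: 'I_n.+1]%SET -> logf (climb s) k <= climb s.+1 k.
  by rewrite /climb iterS.
have := walk_propagation cK c0 c1 K0 closed_setT (w := climb) (m := - T + D%:R * a1)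
  (fun s k sD => climb_window k sD) step wjl (finset.in_setT j) (t := D - d).
rewrite subnK // => /(_ (leqnn D)).
have := climb_S'_lb lS' (leq_subr d D).
move: T_large; set Z := b0 + T - D%:R * a1 => TZ hb0 hprop.
have Z0 : 0 <= Z.
  rewrite -(pmulr_rge0 _ (exprn_gt0 D c0)); apply: le_trans T_large.
  by rewrite addr_ge0 // mulr_ge0 // subr_ge0.
have h1 : c ^+ D * Z <= c ^+ d * (climb (D - d) l - (- T + D%:R * a1)).
  apply: le_trans (_ : c ^+ d * Z <= _).
    by apply: ler_wpM2r => //; apply: ler_wiXn2l => //; rewrite ltW.
  by apply: ler_wpM2l; [apply: exprn_ge0; apply: ltW | rewrite /Z; lra].
have h2 : d%:R * K <= D%:R * K by rewrite ler_wpM2r // ler_nat.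
rewrite /start (negPf jS'); lra.
Qed.

Lemma subvector_extend : exists v : vec,
  forall k, (k \in X) || (k \in S') -> v k + al <= logf v k.
Proof.
apply: (subeigen_of_iter_ge logf_mono logf_shift (u := start) (K := D.-1)) => k.
rewrite prednK // => /orP[/climb_reach //|kS'].
by rewrite {1}/start kS'; apply: climb_on_S'.
Qed.

End Extension.

Lemma subvector_extend_reaching (X S' : {set 'I_n.+1}) (u' : vec) al :
  closed arc S' -> (forall k, k \in S' -> u' k + al <= logf u' k) ->
  (forall j, j \in X -> exists2 l, l \in S' & reach arc j l) ->
  exists v : vec, forall k, (k \in X) || (k \in S') -> v k + al <= logf v k.
Proof.
move=> cS' hu' reachS'; have [c [K [c0 c1 K0 cK]]] := arc_growth_exists.
have [D D0 hD] := reach_walk_bounded arc.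
have nal := normr_ge0 al; have nal' : - `|al| <= al by rewrite lerNl -normrN ler_norm.
have [m0 m0_le] : exists m0, forall k, m0 <= logf (fun _ => 0) k.
  by exists (vmin (logf (fun _ => 0))); apply: vmin_le.
have nm := normr_ge0 m0; have nm' : - `|m0| <= m0 by rewrite lerNl -normrN ler_norm.
pose a1 := - (`|al| + `|m0|).
have a1_le_logf0 k : a1 <= logf (fun _ => 0) k.
  by apply: le_trans (m0_le k); rewrite /a1; lra.
pose Y := (D%:R * (al - a1) + D%:R * K) / c ^+ D - (vmin u' - D%:R * `|al|) + D%:R * a1.
have nY : Y <= `|Y| := ler_norm Y.
have nv : - vmin u' <= `|vmin u'| by rewrite -normrN ler_norm.
apply: (@subvector_extend X S' u' al c K a1 (`|vmin u'| + `|Y|) D) => //; try by rewrite /a1; lra.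
  by have := normr_ge0 Y; lra.
have cD0 : 0 < c ^+ D := exprn_gt0 D c0.
apply: le_trans (_ : _ <= c ^+ D * (vmin u' - D%:R * `|al| + Y - D%:R * a1)) _.
  have -> : vmin u' - D%:R * `|al| + Y - D%:R * a1 =
      (D%:R * (al - a1) + D%:R * K) / c ^+ D by rewrite /Y; ring.
  by rewrite [c ^+ D * _]mulrC divfK ?gt_eqF.
apply: ler_wpM2l; first exact: ltW.
by have := normr_ge0 (vmin u'); lra.
Qed.

Lemma subvector_glue (X S' : {set 'I_n.+1}) (v u' : vec) al :
  closed arc X -> closed arc S' -> (forall k, k \in S' -> k \notin X) ->
  (forall k, k \in X -> v k + al <= logf v k) ->
  (forall k, k \in S' -> u' k + al <= logf u' k) ->
  exists u : vec, forall k, (k \in X) || (k \in S') -> u k + al <= logf u k.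
Proof.
move=> cX cS' S'X hv hu'; exists (fun j => if j \in X then v j else u' j).
move=> k /orP[kX|kS'].
  rewrite kX (@logf_local _ v) => [|j a]; [exact: hv | by rewrite (cX k j kX a)].
rewrite (negPf (S'X k kS')) (@logf_local _ u') => [|j a]; first exact: hu'.
by rewrite (negPf (S'X j (cS' k j kS' a))).
Qed.

Lemma subvector_closed g0 : 0 < g0 ->
  (forall i, closed arc [set j | j \in scc arc i]%SET -> g0 < cw_r (restr0 f (scc arc i))) ->
  forall S, closed arc S -> exists u : vec, forall k, k \in S -> u k + ln g0 <= logf u k.
Proof.
move=> g00 hg; apply: closed_ind => [|S i cS sub cS' [u' hu']].
  by exists (fun _ => 0) => k; rewrite inE.
set C := [set j | j \in scc arc i]%SET in cS' hu' *.
suff [u hu] : exists u : vec, forall k, (k \in C) || (k \in S :\: C) -> u k + ln g0 <= logf u k.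
  exists u => k kS; apply: hu.
  by have [//|kC] := boolP (k \in C); rewrite finset.in_setD kC kS.
have S'C k : k \in S :\: C -> k \notin C by rewrite inE => /andP[].
have [cC|ncC] := pselect (closed arc C).
  have [v hv] := final_class_subvector cC g00 (hg i cC).
  by apply: subvector_glue cC cS' S'C _ hu' => k; rewrite /C inE; apply: hv.
have [k0 [l0 [k0C a0 l0C]]] : exists k0 l0, [/\ k0 \in C, arc k0 l0 & l0 \notin C].
  apply: contrapT => hn; apply: ncC => k l kC a; apply: contrapT => /negP lC.
  by apply: hn; exists k, l.
have k0S : k0 \in S by apply: sub; move: k0C; rewrite /C inE.
have l0S' : l0 \in S :\: C by rewrite finset.in_setD l0C (cS _ _ k0S a0).
have reach_l0 j : j \in C -> reach arc j l0.
  move=> jC; apply: reach_trans (reach_arc a0).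
  by apply: (@scc_reach _ _ i); [move: jC | move: k0C]; rewrite /C !inE.
by apply: subvector_extend_reaching cS' hu' _ => j /reach_l0; exists l0.
Qed.

Lemma min_ratio_gt0 (x : vec) : posvec x -> 0 < min_ratio f x.
Proof.
move=> px; have ratio_gt0 k : 0 < f x k / x k by rewrite divr_gt0 ?px //; apply: fpos.
by apply/bigmin_gtP; split => // k _.
Qed.

Lemma min_ratio_le_max_ratio (x y : vec) : posvec x -> posvec y -> min_ratio f x <= max_ratio f y.
Proof.
move=> px py; have [k _ hk] := @arg_maxP _ _ 'I_n.+1 ord0 xpredT (fun j => x j / y j) isT.
set t := x k / y k in hk; have t0 : 0 < t by rewrite divr_gt0 ?px ?py.
apply: le_trans (min_ratio_le_ratio f x k) _; apply: le_trans (ratio_le_max_ratio f y k).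
have : f x k <= t * f y k.
  apply: (@le_trans _ _ (f (fun j => t * y j) k)); last by rewrite (fhom py t0).
  apply: fop => // [j|j]; first by rewrite mulr_gt0 ?py.
  by rewrite -ler_pdivrMr ?py //; apply: hk.
rewrite [x k](_ : _ = t * y k); last by rewrite /t divfK ?gt_eqF ?py.
rewrite invfM mulrA => h; apply: ler_wpM2r; first by rewrite invr_ge0 ltW ?py.
by rewrite ler_pdivrMr // mulrC.
Qed.

Lemma min_ratio_f_le_cw_lambda (x : vec) : posvec x -> min_ratio f x <= cw_lambda f.
Proof.
apply: (min_ratio_le_cw_lambda (B := max_ratio f one)) => y py.
exact: min_ratio_le_max_ratio py one_pos.
Qed.

Lemma cw_lambda_ge_of_final_bound g0 : 0 < g0 ->
  (forall i, closed arc [set j | j \in scc arc i]%SET -> g0 < cw_r (restr0 f (scc arc i))) ->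
  g0 <= cw_lambda f.
Proof.
move=> g00 hg; have [u hu] := subvector_closed g00 hg closed_setT.
apply: le_trans (min_ratio_f_le_cw_lambda (vexp_pos u)); apply: le_min_ratio => j.
rewrite ler_pdivlMr ?vexp_pos // f_vexp /vexp mulrC -[g0 in _ * g0]lnK ?posrE //.
by rewrite -expRD ler_expR hu // inE.
Qed.

Lemma final_classE i : is_final arc (scc arc i) <-> closed arc [set j | j \in scc arc i]%SET.
Proof.
split=> [[_ cC] k l|cC]; first by rewrite !inE => kC /(cC _ _ kC).
by split=> [|k l kC a]; [exists i | move: (cC k l); rewrite !inE => /(_ kC a)].
Qed.

Lemma cw_lambda_eq_min_final : exists2 C, is_final arc C & cw_lambda f = cw_r (restr0 f C).
Proof.
have [i0 ci0] := final_class_exists arc.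
have [k /asboolP ck hk] := @arg_minP _ _ 'I_n.+1 i0
  (fun i => `[< closed arc [set j | j \in scc arc i]%SET >])
  (fun i => cw_r (restr0 f (scc arc i))) (asboolT ci0).
exists (scc arc k); first exact/final_classE.
apply/le_anti/andP; split.
  apply: (@cw_lambda_le_closed _ k); first exact: scc_refl.
  by move=> a b; move: (ck a b); rewrite !inE; apply.
rewrite leNgt; apply/negP => lt_lr.
have l0 : 0 < cw_lambda f := lt_le_trans (min_ratio_gt0 one_pos) (min_ratio_f_le_cw_lambda one_pos).
have := @cw_lambda_ge_of_final_bound ((cw_lambda f + cw_r (restr0 f (scc arc k))) / 2).
have mid i : closed arc [set j | j \in scc arc i]%SET ->
    (cw_lambda f + cw_r (restr0 f (scc arc k))) / 2 < cw_r (restr0 f (scc arc i)).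
  by move=> ci; apply: lt_le_trans (hk i (asboolT ci)); lra.
move=> /(_ _ mid); lra.
Qed.

Lemma cw_lambda_le_final C : is_final arc C -> cw_lambda f <= cw_r (restr0 f C).
Proof.
move=> [[i ->] cC]; apply: (@cw_lambda_le_closed _ i); first exact: scc_refl.
by move=> a b; rewrite !inE; apply: cC.
Qed.

End LogCoordinates.

Theorem theorem4p3 (R : realType) (n : nat) (f : ('I_n.+1 -> R) -> ('I_n.+1 -> R))
  (fpos : forall x, posvec x -> posvec (f x))
  (fop : order_preserving f) (fhom : homogeneous f) (fconv : mult_convex f) :
  ((exists2 C, is_scc (gf_arc f) C & cw_r f = cw_r (restr0 f C)) /\
   (forall C, is_scc (gf_arc f) C -> cw_r (restr0 f C) <= cw_r f)) /\
  ((exists2 C, is_final (gf_arc f) C & cw_lambda f = cw_r (restr0 f C)) /\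
   (forall C, is_final (gf_arc f) C -> cw_lambda f <= cw_r (restr0 f C))).
Proof.
split; split.
- exact: cw_r_eq_max_scc.
- by move=> C _; apply: cw_r_restr0_le.
- exact: cw_lambda_eq_min_final.
- exact: cw_lambda_le_final.
Qed.
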